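(* For every positive integer $t$ and every finite graph $G$ of cliquewidth at most $t$, the hypergraph of balls in $G$ has a proper array sample compression scheme of size $4t+3$.
   Context: For a hypergraph $H$ (finite $V(H)$, $E(H)\subseteq 2^{V(H)}$): a sample is a pair $(X^+,X^-)$ of subsets of $V(H)$ such that some hyperedge $e$ has $X^+\subseteq e$, $X^-\cap e=\emptyset$; $\mathcal{S}(H)$ is the set of samples; $S$ realizes $(X^+,X^-)$ if $X^+\subseteq S$ and $S\cap X^-=\emptyset$. With a fresh symbol $\bot\notin V(H)$, an array sample compression scheme of size $k$ is a pair $(\kappa,\rho)$, $\kappa:\mathcal{S}(H)\to(V(H)\cup\{\bot\})^k$, $\rho:(V(H)\cup\{\bot\})^k\to 2^{V(H)}$, such that for every sample, $\kappa(X^+,X^-)\in(X^+\cup X^-\cup\{\bot\})^k$ and $\rho(\kappa(X^+,X^-))$ realizes $(X^+,X^-)$; it is proper if all values of $\rho$ are hyperedges. The hypergraph of balls in $G$ has vertex set $V(G)$ and hyperedges all $B_G(c,r)=\{v:\mathrm{dist}_G(c,v)\le r\}$, $c\in V(G)$, $r$ an integer. The cliquewidth of $G$ is the minimum $k$ such that $G$ can be built with labels in $[k]$ using: creation of a single labeled vertex; disjoint union; for labels $i\ne j$, adding all edges between label-$i$ and label-$j$ vertices; relabeling label $i$ to $j$. *)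

From mathcomp Require Import all_boot all_order all_algebra.
Set Implicit Arguments. Unset Strict Implicit. Unset Printing Implicit Defensive.

(* A hypergraph on the finite vertex type T is given by its hyperedge
   predicate E : {set T} -> Prop. *)

Section Hypergraphs.
Variable T : finType.

Definition is_sample (E : {set T} -> Prop) (Xp Xm : {set T}) : Prop :=
  exists B, E B /\ Xp \subset B /\ [disjoint Xm & B].

Definition realizes (S Xp Xm : {set T}) : bool :=
  (Xp \subset S) && [disjoint S & Xm].

(* an array sample compression scheme of size k; [None] plays the role of
   the fresh symbol bot. kappa is given as a function on all pairs; only its
   values on samples matter. *)
Definition is_ASCS (E : {set T} -> Prop) (k : nat)
    (kappa : {set T} -> {set T} -> k.-tuple (option T))
    (rho : k.-tuple (option T) -> {set T}) : Prop :=
  forall Xp Xm, is_sample E Xp Xm ->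
    (forall o, o \in kappa Xp Xm ->
        match o with None => true | Some x => (x \in Xp) || (x \in Xm) end)
    /\ realizes (rho (kappa Xp Xm)) Xp Xm.

Definition is_proper (E : {set T} -> Prop) (k : nat)
    (rho : k.-tuple (option T) -> {set T}) : Prop :=
  forall w, E (rho w).

Definition has_proper_ASCS (E : {set T} -> Prop) (k : nat) : Prop :=
  exists kappa rho, is_ASCS E kappa rho /\ @is_proper E k rho.

End Hypergraphs.

Section Graphs.
Variable T : finType.
Variable e : rel T.  (* simple graph: symmetric, irreflexive (assumed in the theorem) *)

Fixpoint reach (c : T) (n : nat) : {set T} :=
  match n with
  | 0 => [set c]
  | n'.+1 => reach c n' :|: [set v | [exists u in reach c n', e u v]]
  end.

Definition ball (c : T) (r : int) : {set T} :=
  match r with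
  | Posz n => reach c n
  | Negz _ => set0
  end.

Definition is_ball (B : {set T}) : Prop := exists c (r : int), B = ball c r.

End Graphs.

(* k-expressions; vertices of the built graph are named by elements of T *)
Inductive cwexp (T : Type) (k : nat) : Type :=
| CVtx of T & 'I_k
| CUnion of cwexp T k & cwexp T k
| CJoin of 'I_k & 'I_k & cwexp T k
| CRelab of 'I_k & 'I_k & cwexp T k.

Section CW.
Variables (T : finType) (k : nat).

Fixpoint cw_verts (x : cwexp T k) : seq T :=
  match x with
  | CVtx v _ => [:: v]
  | CUnion a b => cw_verts a ++ cw_verts b
  | CJoin _ _ a => cw_verts a
  | CRelab _ _ a => cw_verts a
  end.

Fixpoint cw_lab (x : cwexp T k) (v : T) : option 'I_k :=
  match x with
  | CVtx w l => if v == w then Some l else None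
  | CUnion a b => if v \in cw_verts a then cw_lab a v else cw_lab b v
  | CJoin _ _ a => cw_lab a v
  | CRelab i j a => if cw_lab a v == Some i then Some j else cw_lab a v
  end.

Fixpoint cw_edge (x : cwexp T k) (u v : T) : bool :=
  match x with
  | CVtx _ _ => false
  | CUnion a b => cw_edge a u v || cw_edge b u v
  | CJoin i j a => cw_edge a u v ||
      ((cw_lab a u == Some i) && (cw_lab a v == Some j)) ||
      ((cw_lab a u == Some j) && (cw_lab a v == Some i))
  | CRelab _ _ a => cw_edge a u v
  end.

Fixpoint cw_wf (x : cwexp T k) : bool :=
  match x with
  | CVtx _ _ => true
  | CUnion a b => [&& cw_wf a, cw_wf b & [disjoint cw_verts a & cw_verts b]]
  | CJoin i j a => (i != j) && cw_wf a
  | CRelab _ _ a => cw_wf a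
  end.

Definition cw_builds (x : cwexp T k) (e : rel T) : Prop :=
  [/\ cw_wf x, uniq (cw_verts x), (forall v : T, v \in cw_verts x)
    & forall u v, cw_edge x u v = e u v].

End CW.

Definition cliquewidth_le (T : finType) (e : rel T) (k : nat) : Prop :=
  exists x : cwexp T k, cw_builds x e.

From mathcomp Require Import all_boot all_order all_algebra.
From Stdlib Require Import Classical ClassicalEpsilon.
Set Implicit Arguments. Unset Strict Implicit. Unset Printing Implicit Defensive.

(* A sample realized by the ball B(c, r) is encoded by a few of its own
   vertices, and decoding returns the ball of any centre and radius compatible
   with them; it then suffices that every compatible ball realizes the sample.
   If c is a positive vertex, store c and the positive vertex farthest from it.
   Otherwise, in a t-expression building G, three sample vertices name a
   subterm N1 containing c and a subterm N2 not containing c such that every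
   sample vertex lies in N2 or outside N1.  Vertices of equal label in a
   subterm have the same neighbours outside it, so cutting a path at its last
   vertex inside the subterm shows, for u inside and v outside,
   dist(u, v) <= r iff a_l(u) + b_l(v) <= r for some label l, where a_l(u) is
   the distance from u to an l-labelled vertex of the subterm and b_l(v) the
   length of a path from such a vertex to v that runs outside the subterm.
   Hence, for N1, for N2 and for each of the t labels, the positive vertex
   maximising and the negative vertex minimising its own term of this sum
   certify the whole sample: 4t + 3 entries in all. *)

Section Reach.
Variables (T : finType) (e : rel T).

Lemma reachP c n v :
  reflect (exists p, [/\ path e c p, last c p = v & size p <= n]) (v \in reach e c n).
Proof.
apply: (iffP idP).
- elim: n v => [|n IH] v /=; first by rewrite inE => /eqP ->; exists [::].
  rewrite !inE => /orP[/IH [p [Pp Lp Sp]]|/existsP [u /andP [/IH [p [Pp Lp Sp]] Euv]]].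
  + by exists p; rewrite leqW.
  + exists (rcons p v); rewrite rcons_path Pp Lp Euv last_rcons size_rcons.
    by split.
- case=> p [Pp Lp]; elim: n v p Pp Lp => [|n IH] v p Pp Lp /=.
  + by rewrite leqn0 => /nilP Ep; rewrite -Lp Ep inE.
  + case/lastP: p Pp Lp => [|p y] Pp Lp; first by rewrite inE (IH v [::]).
    rewrite rcons_path in Pp; case/andP: Pp => Pp Ey.
    rewrite last_rcons in Lp; subst y; rewrite size_rcons ltnS => Sp.
    rewrite !inE; apply/orP; right; apply/existsP; exists (last c p).
    by rewrite Ey (IH _ p).
Qed.

Lemma reach_mono c m n v : m <= n -> v \in reach e c m -> v \in reach e c n.
Proof.
by move=> le_mn /reachP [p [Pp Lp Sp]]; apply/reachP; exists p; rewrite (leq_trans Sp).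
Qed.

Lemma reach_self c n : c \in reach e c n.
Proof. by apply/reachP; exists [::]. Qed.

Lemma reach_sym c v n : symmetric e -> v \in reach e c n -> c \in reach e v n.
Proof.
move=> esym /reachP [p [Pp Lp Sp]]; apply/reachP.
exists (rev (belast c p)); split.
- by rewrite -Lp rev_path (@eq_path _ _ e).
- by case: p Lp {Pp Sp} => [|a p] //= <-; rewrite rev_cons last_rcons.
- by rewrite size_rev size_belast.
Qed.

End Reach.

Section Extremum.
Variables (T : finType) (R : T -> T -> Prop).
Hypothesis R_total : forall v w, R v w \/ R w v.
Hypothesis R_trans : forall u v w, R u v -> R v w -> R u w.

Definition greatest_in (P : T -> Prop) (o : option T) :=
  (forall m, o = Some m -> P m) /\ (forall v, P v -> exists2 m, o = Some m & R v m).

Lemma exists_greatest (P : T -> Prop) :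
  (exists v, P v) -> exists2 m, P m & forall v, P v -> R v m.
Proof.
have R_refl v : R v v by case: (R_total v v).
suff /(_ (enum T)) greatest_enum :
    forall s : seq T, (exists2 v, v \in s & P v) ->
    exists2 m, P m & forall v, v \in s -> P v -> R v m.
  case=> v Pv; have [|m Pm Hm] := greatest_enum; first by exists v; rewrite ?mem_enum.
  by exists m => // w Pw; apply: Hm; rewrite ?mem_enum.
elim=> [|a s IH]; first by case.
case: (classic (exists2 w, w \in s & P w)) => [/IH [m Pm Hm] _ | Hs [v]].
- case: (classic (P a)) => [Pa|nPa]; last first.
    by exists m => // w; rewrite inE => /predU1P [->|/Hm].
  have [Ram|Rma] := R_total a m.
    by exists m => // w; rewrite inE => /predU1P [->|/Hm].
  exists a => // w; rewrite inE => /predU1P [-> //|ws Pw].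
  exact: R_trans (Hm _ ws Pw) Rma.
- rewrite inE => /predU1P [-> Pa|vs Pv]; last by case: Hs; exists v.
  exists a => // w; rewrite inE => /predU1P [-> //|ws Pw].
  by case: Hs; exists w.
Qed.

Lemma exists_greatest_in (P : T -> Prop) : exists o, greatest_in P o.
Proof.
case: (classic (exists v, P v)) => [/exists_greatest [m Pm Hm]|nP].
  by exists (Some m); split=> [_ [<-] //|v Pv]; exists m; last exact: Hm.
by exists None; split=> // v Pv; case: nP; exists v.
Qed.

End Extremum.

Section Proximity.
Variables (T : finType) (F : T -> nat -> Prop).
Hypothesis F_mono : forall v m n, m <= n -> F v m -> F v n.

(* Reading [F v j] as "v is within distance j", [v] is no farther than [w]. *)
Definition no_farther v w := forall j, F w j -> F v j.

Lemma no_farther_total v w : no_farther v w \/ no_farther w v.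
Proof.
case: (classic (no_farther v w)) => [|/not_all_ex_not [j]]; first by left.
move=> nH; right=> i Fvi.
have [le_ij|lt_ji] := leqP i j; first by case: nH => _; exact: F_mono Fvi.
have Fwj : F w j by apply: NNPP => nFwj; apply: nH => /nFwj.
exact: F_mono (ltnW lt_ji) Fwj.
Qed.

Lemma no_farther_trans u v w : no_farther u v -> no_farther v w -> no_farther u w.
Proof. by move=> Huv Hvw j /Hvw /Huv. Qed.

End Proximity.

Section ModuleSplit.
Variables (T : finType) (e : rel T) (L : Type) (A : pred T) (lab : T -> option L).
Hypothesis lab_twins :
  forall z z' w, A z -> A z' -> lab z = lab z' -> ~~ A w -> e z w = e z' w.
Hypothesis lab_total : forall z, A z -> exists l, lab z = Some l.

Definition near l u m := exists2 z, A z /\ lab z = Some l & z \in reach e u m.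

Definition far l v m := exists z p,
  [/\ A z /\ lab z = Some l, path e z p, last z p = v, size p <= m & all (predC A) p].

Lemma near_mono l u m n : m <= n -> near l u m -> near l u n.
Proof. by move=> le_mn [z Hz /(reach_mono le_mn)]; exists z. Qed.

Lemma far_mono l v m n : m <= n -> far l v m -> far l v n.
Proof.
by move=> le_mn [z [p [Hz Pp Lp Sp Ap]]]; exists z, p; rewrite (leq_trans Sp).
Qed.

Lemma split_at_last_exit u p : A u -> ~~ A (last u p) ->
  exists p1 p2, [/\ p = p1 ++ p2, A (last u p1) & all (predC A) p2].
Proof.
move=> Au; elim/last_ind: p => [|q y IH]; first by rewrite /= Au.
rewrite last_rcons => nAy; case Aq: (A (last u q)).
  by exists q, [:: y]; rewrite cats1 /= nAy.
have [p1 [p2 [-> A1 A2]]] := IH (negbT Aq).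
by exists p1, (rcons p2 y); rewrite rcons_cat all_rcons /= nAy.
Qed.

Lemma reach_split u v n : A u -> ~~ A v ->
  v \in reach e u n <-> exists l a b, [/\ a + b <= n, near l u a & far l v b].
Proof.
move=> Au nAv; split.
- case/reachP=> p [Pp Lp Sp].
  have [|p1 [p2 [Ep A1 A2]]] := split_at_last_exit Au (p := p); first by rewrite Lp.
  have [l Hl] := lab_total A1.
  move: Pp Sp; rewrite Ep cat_path size_cat => /andP [P1 P2] Sp.
  exists l, (size p1), (size p2); split=> //.
  + by exists (last u p1) => //; apply/reachP; exists p1.
  + by exists (last u p1), p2; rewrite -Lp Ep last_cat.
- case=> l [a [b [Sab [z [Az Lz] /reachP [p1 [P1 L1 S1]]] [z' [p [[Az' Lz'] Pp Lp Sp Ap]]]]]].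
  case: p Pp Lp Sp Ap => [|w p] /=; first by move=> _ Ez'; rewrite -Ez' Az' in nAv.
  move=> /andP [Ez'w Pp] Lp Sp /andP [nAw _].
  apply/reachP; exists (p1 ++ w :: p); split.
  + by rewrite cat_path P1 L1 /= Pp (lab_twins Az Az') ?Ez'w // Lz Lz'.
  + by rewrite last_cat L1.
  + by rewrite size_cat (leq_trans _ Sab) // leq_add.
Qed.

End ModuleSplit.

Section Separator.
Variables (T L : finType) (ball : T -> nat -> {set T}) (F G : L -> T -> nat -> Prop).
Hypothesis G_mono : forall l v m n, m <= n -> G l v m -> G l v n.

Definition via l c r v := exists a b, [/\ a + b <= r, F l c a & G l v b].

Definition admits (p q : L -> option T) c r := forall l,
  (forall v, p l = Some v -> via l c r v) /\ (forall v, q l = Some v -> v \notin ball c r).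

Lemma eq_admits p p' q q' c r : p =1 p' -> q =1 q' -> admits p q c r -> admits p' q' c r.
Proof. by move=> Ep Eq H l; rewrite -Ep -Eq; exact: H. Qed.

Variables (C V : pred T).
Hypothesis ball_split : forall c v r, C c -> V v ->
  v \in ball c r <-> exists l, via l c r v.

Variables (Xp Xm : {set T}) (c : T) (n : nat).

Definition farthest_pos (p : L -> option T) := forall l,
  greatest_in (no_farther (G l)) (fun v => [/\ v \in Xp, V v & via l c n v]) (p l).

Definition nearest_neg (q : L -> option T) := forall l,
  greatest_in (fun v w => no_farther (G l) w v) (fun v => v \in Xm /\ V v) (q l).

Lemma exists_farthest_pos : exists p, farthest_pos p.
Proof.
apply: (@fin_all_exists _ (fun=> option T) (fun l => greatest_in _ _)) => l.
apply: exists_greatest_in; [exact/no_farther_total/G_mono | exact: no_farther_trans].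
Qed.

Lemma exists_nearest_neg : exists q, nearest_neg q.
Proof.
apply: (@fin_all_exists _ (fun=> option T) (fun l => greatest_in _ _)) => l.
apply: exists_greatest_in.
- by move=> v w; case: (no_farther_total (G_mono (l := l)) v w); [right|left].
- by move=> u v w Hvu Hwv; exact: no_farther_trans Hwv Hvu.
Qed.

Lemma admits_center p q : farthest_pos p -> nearest_neg q ->
  [disjoint Xm & ball c n] -> admits p q c n.
Proof.
move=> Hp Hq dis l; split=> v.
- by case/(proj1 (Hp l)).
- by case/(proj1 (Hq l)) => Xv _; rewrite (disjointFr dis Xv).
Qed.

Lemma admits_realizes p q c' r : C c -> C c' -> Xp \subset ball c n ->
  farthest_pos p -> nearest_neg q -> admits p q c' r ->
  {in Xp, forall v, V v -> v \in ball c' r} /\ {in Xm, forall v, V v -> v \notin ball c' r}.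
Proof.
move=> Cc Cc' sub Hp Hq adm; split=> v Xv Vv.
- have [l vl] := (ball_split _ Cc Vv).1 (subsetP sub v Xv).
  have [m pm le_vm] := proj2 (Hp l) v (And3 Xv Vv vl).
  have [a [b [Sab Fa Gb]]] := (proj1 (adm l)) m pm.
  by apply/(ball_split _ Cc' Vv); exists l, a, b; split=> //; exact: le_vm.
- apply/negP => /(ball_split _ Cc' Vv) [l [a [b [Sab Fa Gb]]]].
  have [m qm le_mv] := proj2 (Hq l) v (conj Xv Vv).
  have [_ Vm] := proj1 (Hq l) m qm.
  case/negP: ((proj2 (adm l)) m qm); apply/(ball_split _ Cc' Vm).
  by exists l, a, b; split=> //; exact: le_mv.
Qed.

Lemma exists_separator_code : C c -> Xp \subset ball c n -> [disjoint Xm & ball c n] ->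
  exists p q, [/\ (forall l v, p l = Some v -> v \in Xp),
                  (forall l v, q l = Some v -> v \in Xm),
                  admits p q c n &
                  forall c' r, C c' -> admits p q c' r ->
                    {in Xp, forall v, V v -> v \in ball c' r} /\
                    {in Xm, forall v, V v -> v \notin ball c' r}].
Proof.
move=> Cc sub dis; have [p Hp] := exists_farthest_pos; have [q Hq] := exists_nearest_neg.
exists p, q; split.
- by move=> l v /(proj1 (Hp l)) [].
- by move=> l v /(proj1 (Hq l)) [].
- exact: admits_center.
- by move=> c' r Cc'; apply: admits_realizes.
Qed.

End Separator.

Section CliqueWidthExpressions.
Variables (T : finType) (k : nat).
Implicit Types (x y a b : cwexp T k).

Fixpoint cw_sub y x : Prop :=
  y = x \/ match x with
           | CVtx _ _ => False
           | CUnion a b => cw_sub y a \/ cw_sub y b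
           | CJoin _ _ a | CRelab _ _ a => cw_sub y a
           end.

Lemma cw_sub_refl x : cw_sub x x.
Proof. by case: x => *; left. Qed.

Lemma cw_sub_verts y x : cw_sub y x -> {subset cw_verts y <= cw_verts x}.
Proof.
elim: x => [w l|a IHa b IHb|i j a IH|i j a IH] /= [-> //|] //.
by case=> [/IHa|/IHb] sub v /sub; rewrite mem_cat => ->; rewrite ?orbT.
Qed.

Lemma cw_lab_defined x v : (cw_lab x v != None) = (v \in cw_verts x).
Proof.
elim: x => [w l|a IHa b IHb|i j a IH|i j a IH] //=.
- by rewrite mem_seq1; case: (v == w).
- by rewrite mem_cat; case: ifP => Ha; rewrite ?IHa ?IHb ?Ha.
- by case: (cw_lab a v =P Some i) => [E|_]; rewrite -IH ?E.
Qed.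

Lemma cw_edge_verts x u v : cw_edge x u v -> (u \in cw_verts x) && (v \in cw_verts x).
Proof.
elim: x => [w l|a IHa b IHb|i j a IH|i j a IH] //=.
- by rewrite !mem_cat => /orP [/IHa /andP [-> ->]|/IHb /andP [-> ->]]; rewrite ?orbT.
- case/orP => [/orP [/IH //|]|] /andP [/eqP Lu /eqP Lv];
  by rewrite -!cw_lab_defined Lu Lv.
Qed.

Lemma cw_edge_outr x u w : w \notin cw_verts x -> cw_edge x u w = false.
Proof. by move=> nw; apply/negP => /cw_edge_verts /andP [_ wv]; rewrite wv in nw. Qed.

Lemma cw_edge_outl x u w : u \notin cw_verts x -> cw_edge x u w = false.
Proof. by move=> nu; apply/negP => /cw_edge_verts /andP [uv _]; rewrite uv in nu. Qed.

Lemma cw_sub_twins x y z z' : cw_wf x -> cw_sub y x ->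
  z \in cw_verts y -> z' \in cw_verts y -> cw_lab y z = cw_lab y z' ->
  cw_lab x z = cw_lab x z' /\
  forall w, w \notin cw_verts y -> cw_edge x z w = cw_edge x z' w.
Proof.
move=> + + yz yz' Lzz'; elim: x => [u l|a IHa b IHb|i j a IH|i j a IH] wf [<-|sub].
all: try by split=> // w nw; rewrite !cw_edge_outr.
- case/and3P: wf => wa wb dis /=; case: sub => sub.
  + have [az az'] := (cw_sub_verts sub yz, cw_sub_verts sub yz').
    have [L E] := IHa wa sub; rewrite az az'; split=> // w nw.
    by rewrite E // !(@cw_edge_outl b) // (disjointFr dis).
  + have [bz bz'] := (cw_sub_verts sub yz, cw_sub_verts sub yz').
    have [L E] := IHb wb sub; rewrite (disjointFl dis bz) (disjointFl dis bz').
    by split=> // w nw; rewrite E // !(@cw_edge_outl a) // (disjointFl dis).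
- case/andP: wf => _ wa; have [L E] := IH wa sub.
  by split=> // w nw /=; rewrite E // L.
- by have [L E] := IH wf sub; split=> //=; rewrite L.
Qed.

Lemma cw_verts_nonempty x : exists v, v \in cw_verts x.
Proof.
elim: x => [w l|a [v av] b _|i j a IH|i j a IH] //=.
- by exists w; rewrite inE.
- by exists v; rewrite mem_cat av.
Qed.

Fixpoint cw_lca x s1 s2 :=
  match x with
  | CUnion a b =>
      if (s1 \in cw_verts a) && (s2 \in cw_verts a) then cw_lca a s1 s2
      else if (s1 \in cw_verts b) && (s2 \in cw_verts b) then cw_lca b s1 s2 else x
  | CJoin _ _ a | CRelab _ _ a => cw_lca a s1 s2
  | CVtx _ _ => x
  end.

Fixpoint cw_avoid x s1 s3 :=
  if s3 \notin cw_verts x then x else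
  match x with
  | CUnion a b => if s1 \in cw_verts a then cw_avoid a s1 s3 else cw_avoid b s1 s3
  | CJoin _ _ a | CRelab _ _ a => cw_avoid a s1 s3
  | CVtx _ _ => x
  end.

Definition cw_outer x s1 (o : option T) :=
  if o is Some s3 then cw_avoid x s1 s3 else x.

Lemma cw_lca_sub x s1 s2 : cw_sub (cw_lca x s1 s2) x.
Proof.
elim: x => [w l|a IHa b IHb|i j a IH|i j a IH] /=; try by [left | right].
by case: ifP => _; [right; left | case: ifP => _; [right; right | left]].
Qed.

Lemma cw_avoid_sub x s1 s3 : cw_sub (cw_avoid x s1 s3) x.
Proof.
elim: x => [w l|a IHa b IHb|i j a IH|i j a IH] /=; case: ifP => _; try by [left | right].
by case: ifP => _; right; [left | right].
Qed.

Lemma cw_outer_sub x s1 o : cw_sub (cw_outer x s1 o) x.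
Proof. by case: o => [s|] /=; [exact: cw_avoid_sub | exact: cw_sub_refl]. Qed.

Lemma cw_lca_cover (S : {set T}) x : cw_wf x -> has (mem S) (cw_verts x) ->
  exists s1 s2, [/\ s1 \in S, s2 \in S, s1 \in cw_verts x, s2 \in cw_verts x &
    {in S, forall v, v \in cw_verts x -> v \in cw_verts (cw_lca x s1 s2)}].
Proof.
elim: x => [w l|a IHa b IHb|i j a IH|i j a IH] /=.
- by move=> _ /orP [Sw|//]; exists w, w; rewrite mem_seq1 eqxx; split=> // v _.
- case/and3P => wa wb dis; rewrite has_cat.
  case Ha: (has (mem S) (cw_verts a)); case Hb: (has (mem S) (cw_verts b)) => //= _.
  + case/hasP: Ha => s1 a1 S1; case/hasP: Hb => s2 b2 S2; exists s1, s2.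
    by rewrite (disjointFl dis b2) (disjointFr dis a1) andbF /= !mem_cat a1 b2 orbT;
      split=> // v _.
  + have [s1 [s2 [S1 S2 a1 a2 cov]]] := IHa wa Ha; exists s1, s2.
    rewrite a1 a2 /= !mem_cat a1 a2; split=> // v Sv; rewrite mem_cat => /orP [|bv].
      exact: cov.
    by case/negP: (hasPn (negbT Hb) v bv).
  + have [s1 [s2 [S1 S2 b1 b2 cov]]] := IHb wb Hb; exists s1, s2.
    rewrite (disjointFl dis b1) b1 b2 /= !mem_cat b1 b2 !orbT; split=> // v Sv.
    rewrite mem_cat => /orP [av|]; last exact: cov.
    by case/negP: (hasPn (negbT Ha) v av).
- by case/andP => _; exact: IH.
- exact: IH.
Qed.

Lemma cw_avoid_out x s1 s3 : s3 \notin cw_verts x -> cw_avoid x s1 s3 = x.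
Proof. by case: x => [w l|a b|i j a|i j a] /= ->. Qed.

Definition separates (S : {set T}) c x s1 s2 (s3 : option T) :=
  [/\ [/\ s1 \in S, s2 \in S, s1 \in cw_verts x, s2 \in cw_verts x &
          oapp (fun s => (s \in S) && (s \in cw_verts x)) true s3],
      c \in cw_verts (cw_outer x s1 s3), c \notin cw_verts (cw_lca x s1 s2) &
      {in S, forall v, v \in cw_verts x ->
        (v \in cw_verts (cw_lca x s1 s2)) || (v \notin cw_verts (cw_outer x s1 s3))}].

Lemma separates_congr S c a y s1 s2 s3 : cw_verts y = cw_verts a ->
  (forall s1 s2, cw_lca y s1 s2 = cw_lca a s1 s2) ->
  (forall s1 s, s \in cw_verts a -> cw_avoid y s1 s = cw_avoid a s1 s) ->
  separates S c a s1 s2 s3 -> separates S c y s1 s2 s3.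
Proof.
move=> Ev El Ea [[S1 S2 a1 a2 s3a] c_out c_lca sep].
have Eo : cw_verts (cw_outer y s1 s3) = cw_verts (cw_outer a s1 s3).
  by case: s3 s3a {c_out sep} => [s /andP [_ sa]|_] /=; rewrite ?Ea.
by split; rewrite ?Ev ?El ?Eo.
Qed.

Section UnionStep.
Variables (S : {set T}) (c : T) (x d o : cwexp T k).
Hypotheses (wf_o : cw_wf o) (dis : [disjoint cw_verts d & cw_verts o]).
Hypothesis verts_x : cw_verts x =i cw_verts d ++ cw_verts o.
Hypothesis lca_d : {in cw_verts d &, forall s1 s2, cw_lca x s1 s2 = cw_lca d s1 s2}.
Hypothesis lca_o : {in cw_verts o &, forall s1 s2, cw_lca x s1 s2 = cw_lca o s1 s2}.
Hypothesis avoid_d : {in cw_verts d &, forall s1 s, cw_avoid x s1 s = cw_avoid d s1 s}.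
Hypothesis avoid_do : {in cw_verts d & cw_verts o, forall s1 s, cw_avoid x s1 s = d}.

Lemma separates_union : c \in cw_verts d -> c \notin S -> has (mem S) (cw_verts x) ->
  (has (mem S) (cw_verts d) -> exists s1 s2 s3, separates S c d s1 s2 s3) ->
  exists s1 s2 s3, separates S c x s1 s2 s3.
Proof.
move=> dc nSc hasx IH.
have xd v : v \in cw_verts d -> v \in cw_verts x by rewrite verts_x mem_cat => ->.
have xo v : v \in cw_verts o -> v \in cw_verts x by rewrite verts_x mem_cat orbC => ->.
case hd: (has (mem S) (cw_verts d)).
- have [s1 [s2 [s3 [[S1 S2 d1 d2 s3d] c_out c_lca sep]]]] := IH hd.
  have [s3' [s3'x c_out' out_sub]] : exists s3',
      [/\ oapp (fun s => (s \in S) && (s \in cw_verts x)) true s3',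
          c \in cw_verts (cw_outer x s1 s3') &
          {in S, forall v, v \in cw_verts (cw_outer x s1 s3') ->
                           v \in cw_verts (cw_outer d s1 s3)}].
    case: s3 s3d c_out {sep} => [s /andP [Ss ds]|_] c_out /=.
      by exists (Some s); rewrite /= Ss xd // (avoid_d d1 ds); split=> // v _.
    case ho: (has (mem S) (cw_verts o)).
      case/hasP: ho => s0 o0 S0; exists (Some s0).
      by rewrite /= (avoid_do d1 o0) (S0 : s0 \in S) (xo _ o0); split=> // v _.
    exists None; split=> //=; first exact: xd.
    move=> v Sv; rewrite verts_x mem_cat => /orP [//|ov].
    by case/negP: (hasPn (negbT ho) v ov).
  exists s1, s2, s3'; rewrite /separates (lca_d d1 d2); split=> //; first by rewrite !xd.
  move=> v Sv xv; case: (boolP (v \in cw_verts (cw_outer x s1 s3'))) => [vout|]; last first.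
    by rewrite orbT.
  have vout' := out_sub v Sv vout.
  have vd := cw_sub_verts (cw_outer_sub d s1 s3) vout'.
  by move: (sep v Sv vd); rewrite vout' orbF.
- have ho : has (mem S) (cw_verts o) by move: hasx; rewrite (eq_has_r verts_x) has_cat hd.
  have [s1 [s2 [S1 S2 o1 o2 cov]]] := cw_lca_cover wf_o ho.
  exists s1, s2, None; rewrite /separates /= (lca_o o1 o2); split.
  + by split=> //; apply: xo.
  + exact: xd.
  + apply/negP => /(cw_sub_verts (cw_lca_sub o s1 s2)) oc.
    by rewrite (disjointFl dis oc) in dc.
  + move=> v Sv; rewrite verts_x mem_cat => /orP [dv|ov]; last by rewrite cov.
    by case/negP: (hasPn (negbT hd) v dv).
Qed.

End UnionStep.

Lemma cw_separation (S : {set T}) c x : cw_wf x -> c \in cw_verts x -> c \notin S ->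
  has (mem S) (cw_verts x) -> exists s1 s2 s3, separates S c x s1 s2 s3.
Proof.
move=> + + nSc; elim: x => [w l|a IHa b IHb|i j a IH|i j a IH] /=.
- move=> _; rewrite mem_seq1 => /eqP Ec /orP [Sw|//].
  by move: nSc; rewrite Ec (Sw : w \in S).
- case/and3P => wa wb dis; rewrite mem_cat => /orP [ac|bc] hasx.
  + apply: (separates_union (d := a) (o := b)) => //.
    * by move=> s1 s2 /= -> ->.
    * by move=> s1 s2 /= b1 b2; rewrite (disjointFl dis b1) b1 b2.
    * by move=> s1 s /= a1 sa; rewrite mem_cat sa a1.
    * move=> s1 s /= a1 sb; rewrite mem_cat sb orbT a1 /=.
      by rewrite cw_avoid_out // (disjointFl dis sb).
    * by move=> hasa; exact: IHa.
  + rewrite disjoint_sym in dis; apply: (separates_union (d := b) (o := a)) => //.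
    * by move=> v; rewrite /= !mem_cat orbC.
    * by move=> s1 s2 /= b1 b2; rewrite (disjointFr dis b1) b1 b2.
    * by move=> s1 s2 /= -> ->.
    * by move=> s1 s /= b1 sb; rewrite mem_cat sb orbT (disjointFr dis b1).
    * move=> s1 s /= b1 sa; rewrite mem_cat sa (disjointFr dis b1) /=.
      by rewrite cw_avoid_out // (disjointFl dis sa).
    * by move=> hasb; exact: IHb.
- case/andP => _ wa ac hasx; have [s1 [s2 [s3 sep]]] := IH wa ac hasx.
  by exists s1, s2, s3; apply: separates_congr sep => // ? s /= ->.
- move=> wa ac hasx; have [s1 [s2 [s3 sep]]] := IH wa ac hasx.
  by exists s1, s2, s3; apply: separates_congr sep => // ? s /= ->.
Qed.

End CliqueWidthExpressions.

Lemma realizesI (T : finType) (B Xp Xm : {set T}) :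
  {subset Xp <= B} -> {in Xm, forall v, v \notin B} -> realizes B Xp Xm.
Proof.
move=> XpB XmB; apply/andP; split; first exact/subsetP.
by rewrite disjoint_sym disjoints_subset; apply/subsetP => v /XmB; rewrite inE.
Qed.

Section BallCompression.
Variables (t : nat) (T : finType) (e : rel T) (x : cwexp T t).
Hypothesis esym : symmetric e.
Hypothesis x_builds : cw_builds x e.

Definition in_sub (N : cwexp T t) : pred T := fun v => v \in cw_verts N.
Definition near_sub N := near e (in_sub N) (cw_lab N).
Definition far_sub N := far e (in_sub N) (cw_lab N).

Lemma reach_split_out N c v r : cw_sub N x -> c \in cw_verts N -> v \notin cw_verts N ->
  v \in reach e c r <-> exists l, via (near_sub N) (far_sub N) l c r v.
Proof.
case: x_builds => wf _ _ edgeE subN cN vN.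
apply: reach_split => // [z z' w zN z'N Lzz' wN|z].
  by rewrite -!edgeE; apply: (cw_sub_twins wf subN zN z'N Lzz').2.
by rewrite /in_sub -cw_lab_defined; case: (cw_lab N z) => // l _; exists l.
Qed.

Lemma reach_split_in N c v r : cw_sub N x -> c \notin cw_verts N -> v \in cw_verts N ->
  v \in reach e c r <-> exists l, via (far_sub N) (near_sub N) l c r v.
Proof.
move=> subN cN vN.
have -> : v \in reach e c r = (c \in reach e v r) by apply/idP/idP; apply: reach_sym.
rewrite (@reach_split_out N) //; split=> -[l [a [b [Sab Fa Gb]]]];
  by exists l, b, a; rewrite addnC.
Qed.

(* A code [[:: None, Some c, Some v & _]] stands for the ball around [c] whose
   radius is the distance to [v].  A code [[:: Some s1, Some s2, s3 & _]] names
   the subterms [N1 := cw_outer x s1 s3] and [N2 := cw_lca x s1 s2] and is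
   followed by four blocks of [t] entries, one per label, certifying a
   separator code (see [exists_separator_code]) outside [N1] and inside [N2]. *)
Definition slot (w : seq (option T)) i (l : 'I_t) := nth None w (3 + i * t + l).

Definition is_dist c v r := v \in reach e c r /\ forall m, v \in reach e c m -> r <= m.

Definition valid (w : seq (option T)) c r : Prop :=
  match nth None w 0 with
  | None =>
      if (nth None w 1, nth None w 2) is (Some c0, Some v) then c = c0 /\ is_dist c v r
      else False
  | Some s1 =>
      let N1 := cw_outer x s1 (nth None w 2) in
      let N2 := cw_lca x s1 (odflt s1 (nth None w 1)) in
      [/\ c \in cw_verts N1, c \notin cw_verts N2,
          admits (reach e) (near_sub N1) (far_sub N1) (slot w 0) (slot w 1) c r &
          admits (reach e) (far_sub N2) (near_sub N2) (slot w 2) (slot w 3) c r]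
  end.

Definition decode (w : seq (option T)) : option (T * nat) :=
  epsilon (inhabits None)
    (fun o => if o is Some (c, r) then valid w c r else ~ exists c r, valid w c r).

Definition rho (w : (4 * t + 3).-tuple (option T)) : {set T} :=
  if decode w is Some (c, r) then reach e c r else set0.

Lemma rho_ball (c0 : T) w : is_ball e (rho w).
Proof.
by rewrite /rho; case: decode => [[c r]|]; [exists c, (Posz r) | exists c0, (Negz 0)].
Qed.

Lemma rho_realizes (w : (4 * t + 3).-tuple (option T)) Xp Xm :
  (~ (exists c r, valid w c r) -> realizes set0 Xp Xm) ->
  (forall c r, valid w c r -> realizes (reach e c r) Xp Xm) -> realizes (rho w) Xp Xm.
Proof.
rewrite /rho /decode => none all; set P := (fun o => _).
have : P (epsilon (inhabits None) P).
  apply: epsilon_spec; case: (classic (exists c r, valid w c r)) => [[c [r Vcr]]|nV].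
    by exists (Some (c, r)).
  by exists None.
by case: (epsilon _ P) => [[c r]|] /=; [exact: all | exact: none].
Qed.

Definition sample_entry (Xp Xm : {set T}) (o : option T) :=
  if o is Some v then (v \in Xp) || (v \in Xm) else true.

Definition compression (Xp Xm : {set T}) (w : (4 * t + 3).-tuple (option T)) :=
  all (sample_entry Xp Xm) w /\ realizes (rho w) Xp Xm.

Lemma compression_of_seq Xp Xm s : size s = 4 * t + 3 -> all (sample_entry Xp Xm) s ->
  (~ (exists c r, valid s c r) -> realizes set0 Xp Xm) ->
  (forall c r, valid s c r -> realizes (reach e c r) Xp Xm) ->
  exists w, compression Xp Xm w.
Proof.
move=> /eqP sz entries none all; pose w := insubd (nseq_tuple (4 * t + 3) None) s.
have ws : val w = s by exact: insubdK.
by exists w; split; [rewrite ws | apply: rho_realizes; rewrite ws].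
Qed.

Lemma compression_empty Xp Xm : Xp = set0 -> exists w, compression Xp Xm w.
Proof.
move=> ->; apply: (@compression_of_seq _ _ (nseq (4 * t + 3) None)).
- exact: size_nseq.
- by apply/allP => o; rewrite mem_nseq => /andP [_ /eqP ->].
- by move=> _; apply: realizesI => v; rewrite inE.
- by move=> c r; rewrite /valid !nth_nseq !if_same.
Qed.

Lemma compression_center (Xp Xm : {set T}) c n : Xp \subset reach e c n ->
  [disjoint Xm & reach e c n] -> c \in Xp -> exists w, compression Xp Xm w.
Proof.
move=> sub dis Xc.
pose Fc v j := v \in reach e c j.
have Fc_mono v i j : i <= j -> Fc v i -> Fc v j by exact: reach_mono.
have [v0 Xv0 farthest] := exists_greatest (no_farther_total Fc_mono)
  (@no_farther_trans _ Fc) (ex_intro (fun v => v \in Xp) c Xc).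
have reach_v0 : exists m, v0 \in reach e c m by exists n; exact: (subsetP sub).
have dist_v0 : is_dist c v0 (ex_minn reach_v0).
  by case: ex_minnP => m Hm min_m; split=> // j /min_m.
apply: (@compression_of_seq _ _ ([:: None; Some c; Some v0] ++ nseq (4 * t) None)).
- by rewrite size_cat size_nseq addnC.
- by rewrite all_cat /= Xc Xv0; apply/allP => o; rewrite mem_nseq => /andP [_ /eqP ->].
- by case; exists c, (ex_minn reach_v0).
move=> _ r [-> [v0r min_r]]; apply: realizesI => v Xv.
  exact: farthest Xv r v0r.
apply/negP => /(reach_mono (min_r n (subsetP sub v0 Xv0))) vn.
by rewrite (disjointFr dis Xv) in vn.
Qed.

Definition blocks (hs : seq ('I_t -> option T)) :=
  flatten [seq [seq h l | l <- enum 'I_t] | h <- hs].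

Lemma size_blocks hs : size (blocks hs) = size hs * t.
Proof. by elim: hs => //= h hs IH; rewrite size_cat size_map size_enum_ord IH mulSn. Qed.

Lemma nth_blocks hs i (l : 'I_t) : i < size hs ->
  nth None (blocks hs) (i * t + l) = nth (fun=> None) hs i l.
Proof.
elim: hs i => [|h hs IH] [|i] //= lt_i; rewrite nth_cat size_map size_enum_ord.
  by rewrite mul0n add0n ltn_ord (nth_map l) ?size_enum_ord // nth_ord_enum.
by rewrite mulSn -addnA ltnNge leq_addr /= addKn IH.
Qed.

Definition tree_code s1 s2 s3 hs := [:: Some s1; Some s2; s3] ++ blocks hs.

Lemma valid_tree_code s1 s2 s3 p1 q1 p2 q2 c r :
  let N1 := cw_outer x s1 s3 in let N2 := cw_lca x s1 s2 in
  valid (tree_code s1 s2 s3 [:: p1; q1; p2; q2]) c r <->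
  [/\ c \in cw_verts N1, c \notin cw_verts N2,
      admits (reach e) (near_sub N1) (far_sub N1) p1 q1 c r &
      admits (reach e) (far_sub N2) (near_sub N2) p2 q2 c r].
Proof.
have slotE i : i < 4 -> slot (tree_code s1 s2 s3 [:: p1; q1; p2; q2]) i =1
                        nth (fun=> None) [:: p1; q1; p2; q2] i.
  by move=> lt_i4 l; rewrite /slot /tree_code nth_cat /= -addnA addKn nth_blocks.
split=> -[cN1 cN2 adm1 adm2]; split=> //;
  [apply: eq_admits adm1 | apply: eq_admits adm2 | apply: eq_admits adm1 | apply: eq_admits adm2];
  by move=> l; rewrite slotE.
Qed.

Lemma compression_general (Xp Xm : {set T}) c n : Xp \subset reach e c n ->
  [disjoint Xm & reach e c n] -> c \notin Xp -> Xp != set0 -> exists w, compression Xp Xm w.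
Proof.
move=> sub dis nXc /set0Pn [v0 Xv0]; case: x_builds => wf _ all_verts _.
pose S := Xp :|: Xm.
have nSc : c \notin S by rewrite inE negb_or nXc (disjointFl dis (reach_self e c n)).
have hasS : has (mem S) (cw_verts x) by apply/hasP; exists v0; rewrite ?inE ?Xv0.
have [s1 [s2 [s3 [[S1 S2 _ _ s3S] c_out c_lca sep]]]] :=
  cw_separation wf (all_verts c) nSc hasS.
set N1 := cw_outer x s1 s3; set N2 := cw_lca x s1 s2.
have [p1 [q1 [p1X q1X adm1 real1]]] := exists_separator_code
  (@far_mono _ e _ (in_sub N1) (cw_lab N1)) (V := predC (in_sub N1))
  (fun c' v r => @reach_split_out N1 c' v r (cw_outer_sub x s1 s3)) c_out sub dis.
have [p2 [q2 [p2X q2X adm2 real2]]] := exists_separator_code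
  (@near_mono _ e _ (in_sub N2) (cw_lab N2)) (V := in_sub N2)
  (fun c' v r => @reach_split_in N2 c' v r (cw_lca_sub x s1 s2)) c_lca sub dis.
have entry_block (h : 'I_t -> option T) (A : {set T}) :
    A \subset S -> (forall l v, h l = Some v -> v \in A) ->
    all (sample_entry Xp Xm) [seq h l | l <- enum 'I_t].
  move=> AS hA; apply/allP => _ /mapP [l _ ->]; case E: (h l) => [v|] //=.
  by rewrite -in_setU (subsetP AS _ (hA l v E)).
apply: (@compression_of_seq _ _ (tree_code s1 s2 s3 [:: p1; q1; p2; q2])).
- by rewrite size_cat size_blocks addnC.
- rewrite /tree_code /blocks /= -!in_setU S1 S2 !all_cat.
  rewrite (entry_block _ _ (subsetUl Xp Xm) p1X) (entry_block _ _ (subsetUr Xp Xm) q1X).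
  rewrite (entry_block _ _ (subsetUl Xp Xm) p2X) (entry_block _ _ (subsetUr Xp Xm) q2X).
  by case: s3 s3S {N1 c_out sep adm1 real1} => [s /andP [Ss _]|] //=; rewrite -in_setU Ss.
- by case; exists c, n; apply/valid_tree_code.
move=> c' r /valid_tree_code [c'N1 c'N2 adm1' adm2'].
have [in1 out1] := real1 c' r c'N1 adm1'; have [in2 out2] := real2 c' r c'N2 adm2'.
apply: realizesI => v Xv; have Sv : v \in S by rewrite inE Xv ?orbT.
- by case/orP: (sep v Sv (all_verts v)) => [/(in2 v Xv)|/(in1 v Xv)].
- by case/orP: (sep v Sv (all_verts v)) => [/(out2 v Xv)|/(out1 v Xv)].
Qed.

Lemma compression_exists Xp Xm : is_sample (is_ball e) Xp Xm -> exists w, compression Xp Xm w.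
Proof.
case=> _ [[c [[n|m] ->]] [sub dis]]; last first.
  by apply: compression_empty; apply/eqP; rewrite -subset0.
have [->|Xp0] := eqVneq Xp set0; first exact: compression_empty.
case: (boolP (c \in Xp)) => Xc; first exact: compression_center sub dis Xc.
exact: compression_general sub dis Xc Xp0.
Qed.

End BallCompression.

Theorem theorem2p2 (t : nat) (T : finType) (e : rel T) :
  0 < t -> symmetric e -> irreflexive e -> cliquewidth_le e t ->
  has_proper_ASCS (is_ball e) (4 * t + 3).
Proof.
move=> _ esym _ [x x_builds].
have [c0 _] := cw_verts_nonempty x.
pose w0 := inhabits (nseq_tuple (4 * t + 3) (@None T)).
exists (fun Xp Xm => epsilon w0 (compression e x Xp Xm)), (rho e x).
split=> [Xp Xm sample|w]; last exact: rho_ball.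
case: (epsilon_spec w0 _ (compression_exists esym x_builds sample)) => /allP entries ->.
by split=> // o /entries.
Qed.
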